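(* Let $\mathcal C$ be a class of groups with invariant $\Lambda$-valued pseudo-norms which is closed under taking subgroups (with the restricted pseudo-norm) and under isomorphism. Let $\mathsf n\in\mathbb N\cup\{\omega\}$ and let $\mathsf F_{\mathsf n}$ be the free group of rank $\mathsf n$. Let $(N,\ell)\in\mathcal{NM}(\mathsf F_{\mathsf n})$ be such that the pseudo-normed group $(\mathsf F_{\mathsf n}/N,\ell)$ is metrically LE$\mathcal C$. Then there is a net $\{(N_i,\ell_i):i\in I\}$ in $\mathcal{NM}(\mathsf F_{\mathsf n})$ converging to $(N,\ell)$ such that $(\mathsf F_{\mathsf n}/N_i,\ell_i)\in\mathcal C$ for every $i\in I$.
   Context: $\Lambda$ is a closed convex subset of $[0,\infty)$ containing $0$. A pseudo-norm on $G$ is $\ell:G\to\Lambda$ with $\ell(1)=0$, $\ell(g)=\ell(g^{-1})$, $\ell(gh)\le\ell(g)+\ell(h)$; invariant if $\ell(h^{-1}gh)=\ell(g)$; $\ker\ell=\{g:\ell(g)=0\}$. $\mathcal{NM}(G)$ is the set of pairs $(N,\ell)$ with $N\trianglelefteq G$ and $\ell$ an invariant $\Lambda$-valued pseudo-norm on $G$ with $N\le\ker\ell$; then $\ell(gN)=\ell(g)$ is an invariant pseudo-norm on $G/N$, and $(G/N,\ell)$ denotes this pseudo-normed group. A net $(N_i,\ell_i)$ converges to $(N,\ell)$ if for every finite $K\subseteq G$ and finite $Q\subseteq\Lambda\cap\mathbb Q$ there is $i_0$ such that for all $i\succeq i_0$: $N_i\cap K=N\cap K$ and $\ell_i(g)\,\square\,q\iff\ell(g)\,\square\,q$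 for all $g\in K,q\in Q,\square\in\{<,=,>\}$. For pseudo-normed $(G_1,\ell_1),(G_2,\ell_2)$, finite $D\subseteq G_1$ and finite $Q\subseteq\Lambda\cap\mathbb Q$ with $0\in Q$, $\varphi:G_1\to G_2$ is a $D$-$Q$-almost-homomorphism if injective on $D$, $\varphi(hg)=\varphi(h)\varphi(g)$ whenever $h,g,hg\in D$, and $\ell_1(g)\,\square\,q\iff\ell_2(\varphi(g))\,\square\,q$ for all $g\in D,q\in Q,\square$. $(G,\ell)$ is metrically LE$\mathcal C$ if for all such $D,Q$ there are $(C,\ell_C)\in\mathcal C$ and a $D$-$Q$-almost-homomorphism $G\to C$. *)

From Stdlib Require Import Reals QArith Qreals List.
From Stdlib Require Import ClassicalEpsilon FunctionalExtensionality
  PropExtensionality ProofIrrelevance.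

Set Implicit Arguments.
Unset Strict Implicit.
Local Open Scope R_scope.

Record Group := {
  gcar :> Type;
  gmul : gcar -> gcar -> gcar;
  ginv : gcar -> gcar;
  gone : gcar;
  gmulA : forall x y z, gmul x (gmul y z) = gmul (gmul x y) z;
  gmul1l : forall x, gmul gone x = x;
  gmul1r : forall x, gmul x gone = x;
  gmulVl : forall x, gmul (ginv x) x = gone;
  gmulVr : forall x, gmul x (ginv x) = gone }.

Arguments gmul {g} _ _.
Arguments ginv {g} _.
Arguments gone {g}.

Definition is_hom (G H : Group) (f : G -> H) : Prop :=
  forall x y, f (gmul x y) = gmul (f x) (f y).
Arguments is_hom {G H} f.

Definition bijective_map (A B : Type) (f : A -> B) : Prop :=
  (forall x y, f x = f y -> x = y) /\ (forall y, exists x, f x = y).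

Definition is_free_basis (X : Type) (F : Group) (iota : X -> F) : Prop :=
  forall (H : Group) (f : X -> H),
    exists phi : F -> H,
      is_hom phi /\ (forall x, phi (iota x) = f x) /\
      (forall psi : F -> H, is_hom psi -> (forall x, psi (iota x) = f x) ->
         forall g, psi g = phi g).

Inductive rank := rfin (n : nat) | romega.

Definition gens (r : rank) : Type :=
  match r with
  | rfin n => {k : nat | (k < n)%nat}
  | romega => nat
  end.

Definition admissible_Lambda (L : R -> Prop) : Prop :=
  L 0 /\ (forall x, L x -> 0 <= x) /\
  (forall x y t, L x -> L y -> 0 <= t <= 1 -> L (t * x + (1 - t) * y)) /\
  (forall (u : nat -> R) (l : R), (forall n, L (u n)) -> Un_cv u l -> L l).

Definition pseudo_norm (L : R -> Prop) (G : Group) (l : G -> R) : Prop :=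
  (forall g, L (l g)) /\ l gone = 0 /\ (forall g, l g = l (ginv g)) /\
  (forall g h, l (gmul g h) <= l g + l h).

Definition invariant_pn (G : Group) (l : G -> R) : Prop :=
  forall g h, l (gmul (ginv h) (gmul g h)) = l g.

Definition normal_subgroup (G : Group) (N : G -> Prop) : Prop :=
  N gone /\ (forall x y, N x -> N y -> N (gmul x y)) /\
  (forall x, N x -> N (ginv x)) /\
  (forall x g, N x -> N (gmul (ginv g) (gmul x g))).

Definition in_NM (L : R -> Prop) (G : Group) (N : G -> Prop) (l : G -> R) : Prop :=
  normal_subgroup N /\ pseudo_norm L l /\ invariant_pn l /\
  (forall g, N g -> l g = 0).

Lemma NM_normal L (G : Group) (N : G -> Prop) (l : G -> R) : in_NM L N l -> normal_subgroup N.
Proof. intros H; exact (proj1 H). Qed.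

Section GroupFacts.
Variable G : Group.

Lemma mulAr (x y z : G) : gmul (gmul x y) z = gmul x (gmul y z).
Proof. symmetry; apply gmulA. Qed.

Lemma mulKV (x y : G) : gmul x (gmul (ginv x) y) = y.
Proof. rewrite gmulA, gmulVr, gmul1l; reflexivity. Qed.

Lemma mulVK (x y : G) : gmul (ginv x) (gmul x y) = y.
Proof. rewrite gmulA, gmulVl, gmul1l; reflexivity. Qed.

Lemma inv_uniq (x y : G) : gmul x y = gone -> y = ginv x.
Proof.
  intros H. rewrite <- (gmul1r (ginv x)), <- H, mulVK. reflexivity.
Qed.

Lemma invK (x : G) : ginv (ginv x) = x.
Proof. symmetry; apply inv_uniq, gmulVl. Qed.

Lemma invM (x y : G) : ginv (gmul x y) = gmul (ginv y) (ginv x).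
Proof.
  symmetry; apply inv_uniq. rewrite mulAr, (gmulA y), gmulVr, gmul1l, gmulVr.
  reflexivity.
Qed.
End GroupFacts.

Definition is_subgroup (G : Group) (H : G -> Prop) : Prop :=
  H gone /\ (forall x y, H x -> H y -> H (gmul x y)) /\ (forall x, H x -> H (ginv x)).

Section Subgroup.
Variables (G : Group) (H : G -> Prop) (hH : is_subgroup H).

Definition sub_car := {g : G | H g}.

Lemma sub_ext (x y : sub_car) : proj1_sig x = proj1_sig y -> x = y.
Proof.
  destruct x as [x hx], y as [y hy]; simpl; intros ->; f_equal; apply proof_irrelevance.
Qed.

Definition sub_mul (x y : sub_car) : sub_car :=
  exist _ (gmul (proj1_sig x) (proj1_sig y))
    (proj1 (proj2 hH) _ _ (proj2_sig x) (proj2_sig y)).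
Definition sub_inv (x : sub_car) : sub_car :=
  exist _ (ginv (proj1_sig x)) (proj2 (proj2 hH) _ (proj2_sig x)).
Definition sub_one : sub_car := exist _ gone (proj1 hH).

Definition Subgroup : Group.
Proof.
  refine (@Build_Group sub_car sub_mul sub_inv sub_one _ _ _ _ _);
  intros; apply sub_ext; simpl.
  - apply gmulA.
  - apply gmul1l.
  - apply gmul1r.
  - apply gmulVl.
  - apply gmulVr.
Defined.
End Subgroup.

Section Quotient.
Variables (G : Group) (N : G -> Prop) (hN : normal_subgroup N).

Definition coset (a : G) : G -> Prop := fun h => N (gmul (ginv a) h).

Lemma N1 : N gone. Proof. exact (proj1 hN). Qed.
Lemma NM x y : N x -> N y -> N (gmul x y). Proof. exact (proj1 (proj2 hN) x y). Qed.
Lemma NV x : N x -> N (ginv x). Proof. exact (proj1 (proj2 (proj2 hN)) x). Qed.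
Lemma NJ x g : N x -> N (gmul (ginv g) (gmul x g)).
Proof. exact (proj2 (proj2 (proj2 hN)) x g). Qed.

Lemma coset_eq a b : N (gmul (ginv a) b) -> coset a = coset b.
Proof.
  intros Hab. apply functional_extensionality; intro h.
  apply propositional_extensionality; unfold coset; split; intro Hh.
  - replace (gmul (ginv b) h) with
      (gmul (ginv (gmul (ginv a) b)) (gmul (ginv a) h)).
    + apply NM; [apply NV|]; assumption.
    + rewrite invM, invK, mulAr, mulKV. reflexivity.
  - replace (gmul (ginv a) h) with (gmul (gmul (ginv a) b) (gmul (ginv b) h)).
    + apply NM; assumption.
    + rewrite mulAr, mulKV. reflexivity.
Qed.

Lemma coset_eq_inv a b : coset a = coset b -> N (gmul (ginv a) b).
Proof.
  intros E. change (coset a b). rewrite E. unfold coset. rewrite gmulVl. apply N1.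
Qed.

Definition quot_car := {S : G -> Prop | exists g, S = coset g}.

Lemma quot_ext (S T : quot_car) : proj1_sig S = proj1_sig T -> S = T.
Proof.
  destruct S as [S hS], T as [T hT]; simpl; intros ->; f_equal; apply proof_irrelevance.
Qed.

Definition qmk (g : G) : quot_car := exist _ (coset g) (ex_intro _ g eq_refl).

Definition rep (S : quot_car) : G :=
  proj1_sig (constructive_indefinite_description _ (proj2_sig S)).

Lemma rep_spec (S : quot_car) : proj1_sig S = coset (rep S).
Proof. unfold rep. destruct (constructive_indefinite_description _ _) as [g Hg]. exact Hg. Qed.

Lemma qmk_rep (S : quot_car) : qmk (rep S) = S.
Proof. apply quot_ext. simpl. symmetry. apply rep_spec. Qed.

Lemma qmk_surj (S : quot_car) : exists s, S = qmk s.
Proof. exists (rep S). symmetry. apply qmk_rep. Qed.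

Lemma qmk_eq a b : N (gmul (ginv a) b) -> qmk a = qmk b.
Proof. intros H. apply quot_ext. simpl. apply coset_eq. exact H. Qed.

Lemma rep_qmk a : N (gmul (ginv a) (rep (qmk a))).
Proof. apply coset_eq_inv. exact (rep_spec (qmk a)). Qed.

Definition qmul (S T : quot_car) : quot_car := qmk (gmul (rep S) (rep T)).
Definition qinv (S : quot_car) : quot_car := qmk (ginv (rep S)).
Definition qone : quot_car := qmk gone.

Lemma qmk_mul a b : qmul (qmk a) (qmk b) = qmk (gmul a b).
Proof.
  unfold qmul. apply qmk_eq.
  pose proof (rep_qmk a) as Ha. pose proof (rep_qmk b) as Hb.
  set (a' := rep (qmk a)) in *. set (b' := rep (qmk b)) in *.
  replace (gmul (ginv (gmul a' b')) (gmul a b)) with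
    (gmul (ginv (gmul (ginv b) b'))
          (gmul (ginv b) (gmul (ginv (gmul (ginv a) a')) b))).
  - apply NM; [apply NV; exact Hb|]. apply NJ. apply NV. exact Ha.
  - rewrite !invM, !invK, !mulAr, mulKV. reflexivity.
Qed.

Lemma qmk_inv a : qinv (qmk a) = qmk (ginv a).
Proof.
  unfold qinv. apply qmk_eq.
  pose proof (rep_qmk a) as Ha. set (a' := rep (qmk a)) in *.
  replace (gmul (ginv (ginv a')) (ginv a)) with
    (gmul (ginv (ginv a)) (gmul (gmul (ginv a) a') (ginv a))).
  - apply NJ. exact Ha.
  - rewrite !invK, !mulAr, mulKV. reflexivity.
Qed.

Definition Quot : Group.
Proof.
  refine (@Build_Group quot_car qmul qinv qone _ _ _ _ _).
  - intros x y z. destruct (qmk_surj x) as [a ->], (qmk_surj y) as [b ->],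
      (qmk_surj z) as [c ->]. rewrite !qmk_mul, gmulA. reflexivity.
  - intros x. destruct (qmk_surj x) as [a ->]. unfold qone.
    rewrite qmk_mul, gmul1l. reflexivity.
  - intros x. destruct (qmk_surj x) as [a ->]. unfold qone.
    rewrite qmk_mul, gmul1r. reflexivity.
  - intros x. destruct (qmk_surj x) as [a ->]. unfold qone.
    rewrite qmk_inv, qmk_mul, gmulVl. reflexivity.
  - intros x. destruct (qmk_surj x) as [a ->]. unfold qone.
    rewrite qmk_inv, qmk_mul, gmulVr. reflexivity.
Defined.

(** The induced pseudo-norm l(gN) := l(g) (well defined when N ≤ ker l). *)
Definition qnorm (l : G -> R) : Quot -> R := fun S => l (rep S).

End Quotient.
Arguments qnorm {G N} hN l _.

Definition PNClass := forall G : Group, (G -> R) -> Prop.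

Definition class_of_pn (L : R -> Prop) (C : PNClass) : Prop :=
  forall G l, C G l -> pseudo_norm L l /\ invariant_pn l.

Definition closed_subgroups (C : PNClass) : Prop :=
  forall (G : Group) (l : G -> R) (H : G -> Prop) (hH : is_subgroup H),
    C G l -> C (Subgroup hH) (fun x : sub_car H => l (proj1_sig x)).

Definition closed_iso (C : PNClass) : Prop :=
  forall (G G' : Group) (l : G -> R) (l' : G' -> R) (phi : G -> G'),
    is_hom phi -> bijective_map phi -> (forall g, l' (phi g) = l g) ->
    C G l -> C G' l'.

Definition good_Q (L : R -> Prop) (Qs : list R) : Prop :=
  forall x, In x Qs -> L x /\ exists q : Q, x = Q2R q.

Definition cmp_agree (a b x : R) : Prop :=
  (a < x <-> b < x) /\ (a = x <-> b = x) /\ (a > x <-> b > x).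

Definition almost_hom (G1 : Group) (l1 : G1 -> R) (G2 : Group) (l2 : G2 -> R)
  (D : list G1) (Qs : list R) (phi : G1 -> G2) : Prop :=
  (forall g h, In g D -> In h D -> phi g = phi h -> g = h) /\
  (forall h g, In h D -> In g D -> In (gmul h g) D ->
     phi (gmul h g) = gmul (phi h) (phi g)) /\
  (forall g x, In g D -> In x Qs -> cmp_agree (l1 g) (l2 (phi g)) x).

Definition metrically_LE (L : R -> Prop) (C : PNClass) (G : Group) (l : G -> R) : Prop :=
  forall (D : list G) (Qs : list R), good_Q L Qs -> In 0 Qs ->
    exists (H : Group) (lH : H -> R), C H lH /\
      exists phi : G -> H, almost_hom l lH D Qs phi.

Definition directed (I : Type) (le : I -> I -> Prop) : Prop :=
  inhabited I /\ (forall i, le i i) /\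
  (forall i j k, le i j -> le j k -> le i k) /\
  (forall i j, exists k, le i k /\ le j k).

Definition net_converges (L : R -> Prop) (G : Group) (I : Type) (le : I -> I -> Prop)
  (Ns : I -> G -> Prop) (ls : I -> G -> R) (N : G -> Prop) (l : G -> R) : Prop :=
  forall (K : list G) (Qs : list R), good_Q L Qs ->
    exists i0, forall i, le i0 i ->
      (forall g, In g K -> (Ns i g <-> N g)) /\
      (forall g x, In g K -> In x Qs -> cmp_agree (ls i g) (l g) x).

From Stdlib Require Import Reals.
From Stdlib Require Import QArith Qreals List Lra ClassicalEpsilon.

Set Implicit Arguments.
Local Open Scope R_scope.

(* Index the net by pairs (K, Q) of finite comparison data.  For each index,
   metric LE-C gives an almost-homomorphism phi from F/N into some (H, l_H) in C,
   exact on a finite set D containing all prefixes of words for the elements of K.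
   Freeness extends phi o (g |-> gN) on the generators to a homomorphism
   psi : F -> H, which agrees with phi on K because D contains the words.  The
   pair (ker psi, l_H o psi) then lies in NM(F), matches (N, l) on K and Q, and
   F / ker psi is isomorphic to the subgroup psi(F) of H, hence lies in C. *)

Lemma hom1 (G H : Group) (f : G -> H) : is_hom f -> f gone = gone.
Proof.
  intros hf. transitivity (gmul (ginv (f gone)) (gmul (f gone) (f gone))).
  - symmetry; apply mulVK.
  - rewrite <- hf, gmul1l. apply gmulVl.
Qed.

Lemma homV (G H : Group) (f : G -> H) : is_hom f -> forall x, f (ginv x) = ginv (f x).
Proof. intros hf x. apply inv_uniq. rewrite <- hf, gmulVr. apply hom1; exact hf. Qed.

Lemma inv1 (G : Group) : ginv (gone : G) = gone.
Proof. symmetry; apply inv_uniq; apply gmul1l. Qed.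

Lemma idem1 (G : Group) (x : G) : x = gmul x x -> x = gone.
Proof.
  intros E. transitivity (gmul (ginv x) (gmul x x)).
  - symmetry; apply mulVK.
  - rewrite <- E; apply gmulVl.
Qed.

Section Words.
Variable X : Type.

Definition letter {G : Group} (j : X -> G) (a : X * bool) : G :=
  if snd a then j (fst a) else ginv (j (fst a)).

Fixpoint eval_word {G : Group} (j : X -> G) (w : list (X * bool)) : G :=
  match w with
  | nil => gone
  | a :: w' => gmul (letter j a) (eval_word j w')
  end.

Definition flip_letter (a : X * bool) : X * bool := (fst a, negb (snd a)).

Lemma eval_word_app (G : Group) (j : X -> G) w1 w2 :
  eval_word j (w1 ++ w2) = gmul (eval_word j w1) (eval_word j w2).
Proof.
  induction w1 as [|a w IH]; simpl.
  - rewrite gmul1l; reflexivity.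
  - rewrite IH, gmulA; reflexivity.
Qed.

Lemma eval_word_inv (G : Group) (j : X -> G) w :
  eval_word j (rev (map flip_letter w)) = ginv (eval_word j w).
Proof.
  induction w as [|[x b] w IH]; simpl.
  - rewrite inv1; reflexivity.
  - rewrite eval_word_app, IH, invM. simpl. rewrite gmul1r. f_equal.
    destruct b; unfold letter; simpl; [reflexivity | rewrite invK; reflexivity].
Qed.

Lemma hom_eval_word (G H : Group) (f : G -> H) (j : X -> G) w :
  is_hom f -> f (eval_word j w) = eval_word (fun x => f (j x)) w.
Proof.
  intros hf. induction w as [|[x b] w IH]; simpl.
  - apply hom1; exact hf.
  - rewrite hf, IH. destruct b; unfold letter; simpl; [|rewrite (homV hf)]; reflexivity.
Qed.

(* Words of the form [eval_word iota w] form a subgroup through which the identity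
   of [F] factors; uniqueness in the universal property forces it to be all of [F]. *)
Lemma free_basis_generates (F : Group) (iota : X -> F) :
  is_free_basis iota -> forall g, exists w, eval_word iota w = g.
Proof.
  intros hF g.
  set (W := fun g : F => exists w, eval_word iota w = g).
  assert (hW : is_subgroup W).
  { split; [|split].
    - exists nil; reflexivity.
    - intros x y [w1 <-] [w2 <-]. exists (w1 ++ w2). apply eval_word_app.
    - intros x [w <-]. exists (rev (map flip_letter w)). apply eval_word_inv. }
  pose (f := fun x => exist W (iota x) (ex_intro _ ((x, true) :: nil) (gmul1r (iota x)))
           : Subgroup hW).
  destruct (hF (Subgroup hW) f) as [phi [hphi [hphix _]]].
  destruct (hF F iota) as [phi0 [_ [_ huniq]]].
  assert (through_W : forall g, proj1_sig (phi g) = phi0 g).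
  { apply (huniq (fun g => proj1_sig (phi g))).
    - intros x y; simpl. rewrite hphi. reflexivity.
    - intros x. rewrite hphix. reflexivity. }
  assert (identity : forall g, g = phi0 g).
  { apply (huniq (fun g => g)); [intros x y | intros x]; reflexivity. }
  rewrite (identity g), <- through_W. exact (proj2_sig (phi g)).
Qed.

(* An almost-homomorphism exact on these points agrees at [eval_word j w] with any
   homomorphism matching it on the generators (see [hom_agrees_on_words]). *)
Fixpoint word_support {G : Group} (j : X -> G) (w : list (X * bool)) : list G :=
  match w with
  | nil => gone :: nil
  | a :: w' => j (fst a) :: ginv (j (fst a)) :: eval_word j w :: word_support j w'
  end.

Lemma word_support_one (G : Group) (j : X -> G) w : In gone (word_support j w).
Proof. induction w; simpl; auto. Qed.

Lemma word_support_eval (G : Group) (j : X -> G) w : In (eval_word j w) (word_support j w).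
Proof. destruct w; simpl; auto. Qed.

Lemma finite_word_support {F G : Group} (iota : X -> F) (j : X -> G) (K : list F) :
  is_free_basis iota ->
  exists D : list G, forall g, In g K ->
    exists w, eval_word iota w = g /\ incl (word_support j w) D.
Proof.
  intros hF. induction K as [|g K [D hD]].
  - exists nil. intros g [].
  - destruct (free_basis_generates hF g) as [w hw].
    exists (word_support j w ++ D). intros h [<- | Hh].
    + exists w. split; [exact hw | apply incl_appl, incl_refl].
    + destruct (hD h Hh) as [v [hv hvD]]. exists v. split; [exact hv | apply incl_appr, hvD].
Qed.

End Words.

Definition mul_on {G H : Group} (D : list G) (phi : G -> H) : Prop :=
  forall h g, In h D -> In g D -> In (gmul h g) D -> phi (gmul h g) = gmul (phi h) (phi g).

Lemma mul_on_one {G H : Group} {D : list G} {phi : G -> H} :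
  mul_on D phi -> In gone D -> phi gone = gone.
Proof.
  intros hmul h1. apply idem1. rewrite <- hmul, gmul1l; auto. rewrite gmul1l; exact h1.
Qed.

Lemma almost_hom_eq1 {G H : Group} {D : list G} {phi : G -> H} {x : G} :
  (forall g h, In g D -> In h D -> phi g = phi h -> g = h) -> mul_on D phi ->
  In gone D -> In x D -> (phi x = gone <-> x = gone).
Proof.
  intros hinj hmul h1 hx. rewrite <- (mul_on_one hmul h1). split.
  - intros E. apply hinj; auto.
  - intros ->. reflexivity.
Qed.

Lemma hom_agrees_on_words {X : Type} {F G H : Group} {iota : X -> F} {j : X -> G}
  {phi : G -> H} {psi : F -> H} {D : list G} :
  mul_on D phi -> is_hom psi -> (forall x, psi (iota x) = phi (j x)) ->
  forall w, incl (word_support j w) D -> psi (eval_word iota w) = phi (eval_word j w).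
Proof.
  intros hmul hpsi hgen w. induction w as [|[x b] w IH]; intros hw.
  - simpl. rewrite (hom1 hpsi). symmetry. apply (mul_on_one hmul), hw. simpl; auto.
  - assert (hx : In (j x) D) by (apply hw; simpl; auto).
    assert (hxV : In (ginv (j x)) D) by (apply hw; simpl; auto).
    assert (hxw : In (eval_word j ((x, b) :: w)) D) by (apply hw; simpl; auto).
    assert (hsub : incl (word_support j w) D) by (intros y Hy; apply hw; simpl; auto).
    assert (h1 : In gone D) by (apply hsub, word_support_one).
    assert (hletter : In (letter j (x, b)) D /\
                      psi (letter iota (x, b)) = phi (letter j (x, b))).
    { unfold letter; simpl. destruct b; split; auto.
      rewrite (homV hpsi), hgen. symmetry. apply inv_uniq.
      rewrite <- hmul, gmulVr; [apply (mul_on_one hmul h1) | auto | auto | ].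
      rewrite gmulVr; exact h1. }
    destruct hletter as [hlD hl].
    simpl. rewrite hpsi, hl, IH by exact hsub. symmetry. apply hmul; auto.
    apply hsub, word_support_eval.
Qed.

Lemma qmk_hom (G : Group) (N : G -> Prop) (hN : normal_subgroup N) :
  @is_hom G (Quot hN) (qmk N).
Proof. intros a b. symmetry. exact (qmk_mul hN a b). Qed.

Lemma qmk_eq1 (G : Group) (N : G -> Prop) (hN : normal_subgroup N) (g : G) :
  qmk N g = qmk N gone <-> N g.
Proof.
  split; intros E.
  - pose proof (coset_eq_inv hN (f_equal (@proj1_sig _ _) E)) as E'.
    rewrite gmul1r in E'. rewrite <- invK. apply (NV hN). exact E'.
  - apply (qmk_eq hN). rewrite gmul1r. apply (NV hN). exact E.
Qed.

Lemma qnorm_qmk (L : R -> Prop) (G : Group) (N : G -> Prop) (l : G -> R)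
  (hN : normal_subgroup N) (hNM : in_NM L N l) (g : G) :
  qnorm hN l (qmk N g) = l g.
Proof.
  destruct hNM as [_ [[_ [_ [pS pT]]] [_ hz]]]. unfold qnorm.
  pose proof (hz _ (rep_qmk hN g)) as Hn.
  set (r := rep (qmk N g)) in *.
  pose proof (pT g (gmul (ginv g) r)) as T1. rewrite mulKV in T1.
  pose proof (pT r (ginv (gmul (ginv g) r))) as T2.
  rewrite <- pS, invM, invK, mulKV in T2. lra.
Qed.

Lemma in_NM_ker (L : R -> Prop) (F H : Group) (lH : H -> R) (psi : F -> H) :
  pseudo_norm L lH -> invariant_pn lH -> is_hom psi ->
  in_NM L (fun g => psi g = gone) (fun g => lH (psi g)).
Proof.
  intros [pL [p1 [pS pT]]] hinv hpsi.
  split; [|split; [|split]].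
  - split; [|split; [|split]].
    + apply hom1; exact hpsi.
    + intros x y Hx Hy. rewrite hpsi, Hx, Hy, gmul1l; reflexivity.
    + intros x Hx. rewrite (homV hpsi), Hx, inv1; reflexivity.
    + intros x g Hx. rewrite !hpsi, (homV hpsi), Hx, gmul1l, gmulVl; reflexivity.
  - split; [|split; [|split]].
    + intros g; apply pL.
    + rewrite (hom1 hpsi); exact p1.
    + intros g. rewrite (homV hpsi). apply pS.
    + intros g h. rewrite hpsi. apply pT.
  - intros g h. rewrite !hpsi, (homV hpsi). apply hinv.
  - intros g Hg. simpl. rewrite Hg. exact p1.
Qed.

(* First isomorphism theorem: [F / ker psi] is isometric to the image of [psi]. *)
Lemma quot_ker_in_class (C : PNClass) (hCsub : closed_subgroups C) (hCiso : closed_iso C)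
  (F H : Group) (lH : H -> R) (psi : F -> H) (hpsi : is_hom psi) (hCH : C H lH)
  (hN : normal_subgroup (fun g => psi g = gone)) :
  C (Quot hN) (qnorm hN (fun g => lH (psi g))).
Proof.
  set (N := fun g => psi g = gone) in *.
  set (Im := fun y : H => exists g, psi g = y).
  assert (hIm : is_subgroup Im).
  { split; [|split].
    - exists gone; apply hom1; exact hpsi.
    - intros x y [a <-] [b <-]. exists (gmul a b). apply hpsi.
    - intros x [a <-]. exists (ginv a). apply homV; exact hpsi. }
  assert (same_coset : forall a b, N (gmul (ginv a) b) -> psi a = psi b).
  { intros a b Hab. unfold N in Hab. rewrite hpsi, (homV hpsi) in Hab.
    apply inv_uniq in Hab. rewrite Hab, invK. reflexivity. }
  assert (qmk_psi : forall a b, qmk N a = qmk N b <-> psi a = psi b).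
  { intros a b; split; intros E.
    - apply same_coset, (coset_eq_inv hN). exact (f_equal (@proj1_sig _ _) E).
    - apply (qmk_eq hN). unfold N. rewrite hpsi, (homV hpsi), E, gmulVl. reflexivity. }
  pose (pre := fun y : sub_car Im =>
          proj1_sig (constructive_indefinite_description _ (proj2_sig y))).
  assert (hpre : forall y, psi (pre y) = proj1_sig y).
  { intros y. exact (proj2_sig (constructive_indefinite_description _ (proj2_sig y))). }
  apply (hCiso (Subgroup hIm) (Quot hN) (fun y => lH (proj1_sig y))
           (qnorm hN (fun g => lH (psi g))) (fun y => qmk N (pre y))).
  - intros y1 y2. rewrite <- (qmk_hom hN). apply qmk_psi. rewrite hpsi, !hpre. reflexivity.
  - split.
    + intros y1 y2 E. apply qmk_psi in E. rewrite !hpre in E. apply sub_ext. exact E.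
    + intros S. destruct (qmk_surj S) as [s ->].
      exists (exist Im (psi s) (ex_intro _ s eq_refl)). apply qmk_psi. rewrite hpre. reflexivity.
  - intros y. unfold qnorm. rewrite <- (same_coset _ _ (rep_qmk hN (pre y))), hpre. reflexivity.
  - apply hCsub. exact hCH.
Qed.

Definition approximates {F H : Group} (N : F -> Prop) (l : F -> R) (K : list F) (Qs : list R)
  (lH : H -> R) (psi : F -> H) : Prop :=
  forall g, In g K ->
    (psi g = gone <-> N g) /\ forall x, In x Qs -> cmp_agree (lH (psi g)) (l g) x.

Lemma approximates_incl (F H : Group) (N : F -> Prop) (l : F -> R) K K' Qs Qs'
  (lH : H -> R) (psi : F -> H) :
  incl K K' -> incl Qs Qs' -> approximates N l K' Qs' lH psi -> approximates N l K Qs lH psi.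
Proof. intros hK hQ happ g Hg. split; [|intros x Hx]; apply happ; auto. Qed.

Lemma cmp_agree_sym a b x : cmp_agree a b x -> cmp_agree b a x.
Proof. unfold cmp_agree; tauto. Qed.

Lemma good_Q_cons0 (L : R -> Prop) (Qs : list R) : L 0 -> good_Q L Qs -> good_Q L (0 :: Qs).
Proof.
  intros h0 hQ x [<- | Hx]; [|exact (hQ x Hx)].
  split; [exact h0|]. exists 0%Q. unfold Q2R; simpl; ring.
Qed.

Section Approximation.
Variables (L : R -> Prop) (C : PNClass) (X : Type) (F : Group) (iota : X -> F).
Variables (N : F -> Prop) (l : F -> R) (hNM : in_NM L N l).
Hypotheses (hL0 : L 0) (hF : is_free_basis iota).
Hypothesis hLE : metrically_LE L C (qnorm (NM_normal hNM) l).

Lemma free_approximation (K : list F) (Qs : list R) : good_Q L Qs ->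
  exists (H : Group) (lH : H -> R) (psi : F -> H),
    C H lH /\ is_hom psi /\ approximates N l K Qs lH psi.
Proof.
  intros hQ. set (hN := NM_normal hNM).
  set (j := fun x => qmk N (iota x) : Quot hN).
  destruct (finite_word_support j K hF) as [D hD].
  destruct (hLE D (good_Q_cons0 hL0 hQ) (or_introl eq_refl))
    as [H [lH [hCH [phi [hinj [hmul hcmp]]]]]].
  destruct (hF H (fun x => phi (j x))) as [psi [hpsi [hgen _]]].
  exists H, lH, psi. split; [exact hCH | split; [exact hpsi|]].
  intros g Hg. destruct (hD g Hg) as [w [<- hw]].
  assert (hqmk : qmk N (eval_word iota w) = eval_word j w)
    by exact (hom_eval_word iota w (qmk_hom hN)).
  assert (hwD : In (eval_word j w) D) by apply hw, word_support_eval.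
  assert (h1D : In (gone : Quot hN) D) by apply hw, word_support_one.
  rewrite (hom_agrees_on_words hmul hpsi hgen w hw). split.
  - apply (iff_trans (almost_hom_eq1 hinj hmul h1D hwD)). rewrite <- hqmk. exact (qmk_eq1 hN _).
  - intros x Hx. apply cmp_agree_sym.
    rewrite <- (qnorm_qmk hN hNM), hqmk. exact (hcmp _ x hwD (or_intror Hx)).
Qed.

End Approximation.

Definition fin_index (A : Type) (L : R -> Prop) := {p : list A * list R | good_Q L (snd p)}.

Definition fin_index_le (A : Type) (L : R -> Prop) (i j : fin_index A L) : Prop :=
  incl (fst (proj1_sig i)) (fst (proj1_sig j)) /\ incl (snd (proj1_sig i)) (snd (proj1_sig j)).

Lemma fin_index_directed (A : Type) (L : R -> Prop) : directed (@fin_index_le A L).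
Proof.
  split; [|split; [|split]].
  - constructor. exists (nil, nil). intros x [].
  - intros i; split; apply incl_refl.
  - intros i j k [a b] [c d]; split; eapply incl_tran; eauto.
  - intros [[K1 Q1] h1] [[K2 Q2] h2].
    assert (h : good_Q L (snd (K1 ++ K2, Q1 ++ Q2))).
    { intros x Hx. simpl in Hx. apply in_app_or in Hx. destruct Hx; auto. }
    exists (exist _ (K1 ++ K2, Q1 ++ Q2) h).
    split; split; simpl; first [apply incl_appl, incl_refl | apply incl_appr, incl_refl].
Qed.

Lemma choose_groups (I F : Type) (P : forall H : Group, (H -> R) -> (F -> H) -> I -> Prop) :
  (forall i, exists (H : Group) (lH : H -> R) (psi : F -> H), P H lH psi i) ->
  exists (Hs : I -> Group) (lHs : forall i, Hs i -> R) (psis : forall i, F -> Hs i),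
    forall i, P (Hs i) (lHs i) (psis i) i.
Proof.
  intros hP.
  pose (pick := fun i => constructive_indefinite_description _ (hP i)).
  pose (pickl := fun i => constructive_indefinite_description _ (proj2_sig (pick i))).
  pose (pickpsi := fun i => constructive_indefinite_description _ (proj2_sig (pickl i))).
  exists (fun i => proj1_sig (pick i)), (fun i => proj1_sig (pickl i)),
    (fun i => proj1_sig (pickpsi i)).
  intros i. exact (proj2_sig (pickpsi i)).
Qed.

Theorem theorem5p5
  (L : R -> Prop) (hL : admissible_Lambda L)
  (C : PNClass) (hC : class_of_pn L C)
  (hCsub : closed_subgroups C) (hCiso : closed_iso C)
  (r : rank) (F : Group) (iota : gens r -> F) (hF : is_free_basis iota)
  (N : F -> Prop) (l : F -> R) (hNM : in_NM L N l)
  (hLE : metrically_LE L C (qnorm (NM_normal hNM) l)) :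
  exists (I : Type) (le : I -> I -> Prop), directed le /\
    exists (Ns : I -> F -> Prop) (ls : I -> F -> R)
           (hNs : forall i, in_NM L (Ns i) (ls i)),
      net_converges L le Ns ls N l /\
      forall i, C (Quot (NM_normal (hNs i))) (qnorm (NM_normal (hNs i)) (ls i)).
Proof.
  destruct (@choose_groups (fin_index F L) F
              (fun H lH psi i => C H lH /\ is_hom psi /\
                 approximates N l (fst (proj1_sig i)) (snd (proj1_sig i)) lH psi))
    as [Hs [lHs [psis hpsis]]].
  { intros i. exact (free_approximation (proj1 hL) hF hLE _ (proj2_sig i)). }
  assert (hNs : forall i, in_NM L (fun g => psis i g = gone) (fun g => lHs i (psis i g))).
  { intros i. destruct (hpsis i) as [hCi [hhom _]]. destruct (hC _ _ hCi).
    apply in_NM_ker; assumption. }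
  exists (fin_index F L), (@fin_index_le F L). split; [apply fin_index_directed|].
  exists (fun i g => psis i g = gone), (fun i g => lHs i (psis i g)), hNs. split.
  - intros K Qs hQ. exists (exist _ (K, Qs) hQ). intros i [hK hQs].
    pose proof (approximates_incl hK hQs (proj2 (proj2 (hpsis i)))) as happ.
    split; intros g Hg; [|intros x Hx]; apply happ; auto.
  - intros i. destruct (hpsis i) as [hCi [hhom _]]. apply quot_ker_in_class; assumption.
Qed.
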